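(* Let $\theta\in k$ and let $(A,R)$ be a Rota--Baxter algebra of weight $\theta$. For all $b_1,\ldots,b_n\in A$, $$ \sum_{\sigma\in S_n}R\Big(\cdots R\big(R(b_{\sigma(1)})b_{\sigma(2)}\big)\cdots\Big)b_{\sigma(n)}=\sum_{\{P_1,\ldots,P_k\}}b_{P_1}\ast_\theta\cdots\ast_\theta b_{P_k}, $$ where the sum runs over all set partitions $\{P_1,\ldots,P_k\}$ of $\{1,\ldots,n\}$ with blocks indexed so that $\max P_1<\cdots<\max P_k$, and for a block $P_i=\{p_1<\cdots<p_h\}$, $$ b_{P_i}:=\sum_{\sigma\in S_{h-1}}\Big(\cdots\big((b_{p_h}\triangleright_\theta b_{p_{\sigma(h-1)}})\triangleright_\theta b_{p_{\sigma(h-2)}}\big)\cdots\triangleright_\theta b_{p_{\sigma(2)}}\Big)\triangleright_\theta b_{p_{\sigma(1)}} $$ (for $h=1$, $b_{P_i}=b_{p_1}$).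
   Context: $k$ is a field of characteristic zero. A Rota--Baxter algebra of weight $\theta$ is a unital associative algebra $A$ with a linear map $R:A\to A$ such that $R(x)R(y)=R(R(x)y+xR(y))+\theta R(xy)$ for all $x,y\in A$. Define $a\triangleright_\theta b:=R(a)b-bR(a)-\theta ba$ and the (associative) double product $a\ast_\theta b:=R(a)b+aR(b)+\theta ab$. *)

From HB Require Import structures.
From mathcomp Require Import all_boot all_order all_algebra all_fingroup.
Set Implicit Arguments. Unset Strict Implicit. Unset Printing Implicit Defensive.
Import GRing.Theory.
Local Open Scope ring_scope.

Section RB.
Variables (F : fieldType) (A : algType F).

Definition is_rota_baxter (theta : F) (R : A -> A) : Prop :=
  forall x y : A, R x * R y = R (R x * y + x * R y) + theta *: R (x * y).

Definition rb_tri (theta : F) (R : A -> A) (a b : A) : A :=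
  R a * b - b * R a - theta *: (b * a).

Definition rb_star (theta : F) (R : A -> A) (a b : A) : A :=
  R a * b + a * R b + theta *: (a * b).

Definition rb_word (R : A -> A) (s : seq A) : A :=
  match s with
  | [::] => 0
  | c :: s' => foldl (fun acc x => R acc * x) c s'
  end.

(* Left-bracketed product x1 *_theta x2 *_theta ... *_theta xk
   (the double product is associative, so the bracketing is immaterial). *)
Definition star_prod (theta : F) (R : A -> A) (s : seq A) : A :=
  match s with
  | [::] => 0
  | c :: s' => foldl (rb_star theta R) c s'
  end.

Variable n : nat.

Definition block_elems (B : {set 'I_n}) : seq 'I_n :=
  sort (fun i j : 'I_n => (val i <= val j)%N) (enum B).

Definition block_max (B : {set 'I_n}) : nat := \max_(i in B) val i.

(* b_P for a block P = {p_1 < ... < p_h}: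
   sum over sigma in S_{h-1} of
   (((b_{p_h} |> b_{p_sigma(h-1)}) |> b_{p_sigma(h-2)}) ...) |> b_{p_sigma(1)}.
   (0-indexed: qb`_i = b_{p_{i+1}}.) *)
Definition block_term (theta : F) (R : A -> A) (b : 'I_n -> A)
    (B : {set 'I_n}) : A :=
  let qb := [seq b i | i <- block_elems B] in
  let h := size qb in
  \sum_(s : 'S_(h.-1))
     foldl (rb_tri theta R) (last 0 qb)
           [seq qb`_(s j) | j <- rev (enum 'I_(h.-1))].

Definition sorted_blocks (P : {set {set 'I_n}}) : seq {set 'I_n} :=
  sort (fun B C => (block_max B <= block_max C)%N) (enum P).

Definition rb_lhs (R : A -> A) (b : 'I_n -> A) : A :=
  \sum_(s : 'S_n) rb_word R [seq b (s i) | i <- enum 'I_n].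

Definition rb_rhs (theta : F) (R : A -> A) (b : 'I_n -> A) : A :=
  \sum_(P : {set {set 'I_n}} | partition P [set: 'I_n])
     star_prod theta R [seq block_term theta R b B | B <- sorted_blocks P].

End RB.

From HB Require Import structures.
From mathcomp Require Import all_boot all_order all_algebra all_fingroup.
Import GRing.Theory.
Local Open Scope ring_scope.

Set Implicit Arguments. Unset Strict Implicit. Unset Printing Implicit Defensive.

(* Regard both sides as functions of the set S of letters. Both satisfy
   X(S) = sum_(j in S) R^(X(S \ j)) b_j, where R^ is R except that the empty
   set gives 1; fixed points of this recursion are unique. For the left side
   this is splitting off the last letter. For the right side, the block Q of
   the maximum m of S comes last in every star product, and R(x * y) = R x R y
   turns R of a partition sum into a product along that block. Expanding
   b_Q = sum_(j in Q \ m) b_(Q \ j) |> b_j by its last letter as well, the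
   identity x |> c + c (R x + theta x) = R(x) c merges the terms where the
   last letter j lies in Q with those where it lies in an earlier block. *)

Section Orderings.
Variables (T : finType) (V : nmodType).
Implicit Types (S : {set T}) (G : seq T -> V).

Definition sum_orderings S G : V := \sum_(t <- permutations (enum S)) G t.

Lemma big_permutations_perm (s1 s2 : seq T) G : perm_eq s1 s2 ->
  \sum_(t <- permutations s1) G t = \sum_(t <- permutations s2) G t.
Proof. by move/perm_permutations; apply: perm_big. Qed.

Lemma sum_orderings0 G : sum_orderings set0 G = G [::].
Proof. by rewrite /sum_orderings enum_set0 big_seq1. Qed.

Lemma sum_orderings_rev S G : sum_orderings S (G \o rev) = sum_orderings S G.
Proof.
rewrite /sum_orderings -(big_map rev xpredT G); apply: perm_big.
apply: uniq_perm; rewrite ?(map_inj_uniq (can_inj revK)) ?permutations_uniq //.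
move=> t; rewrite mem_permutations; apply/mapP/idP => [[u]|Ht].
  by rewrite mem_permutations => Hu ->; rewrite perm_rev.
by exists (rev t); rewrite ?revK // mem_permutations perm_rev.
Qed.

Lemma sum_orderings_cons S G : S != set0 ->
  sum_orderings S G = \sum_(j in S) sum_orderings (S :\ j) (fun t => G (j :: t)).
Proof.
move=> S0; rewrite /sum_orderings (perm_big _ (permutationsE _)); last first.
  by rewrite -cardE card_gt0.
rewrite big_allpairs_dep undup_id ?enum_uniq // -big_enum /=.
apply: eq_big_seq => j; rewrite mem_enum => Sj; apply: big_permutations_perm.
apply: uniq_perm; rewrite ?rem_uniq ?enum_uniq // => x.
by rewrite mem_rem_uniq ?enum_uniq // !inE !mem_enum !inE.
Qed.

Lemma sum_orderings_rcons S G : S != set0 ->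
  sum_orderings S G = \sum_(j in S) sum_orderings (S :\ j) (fun t => G (rcons t j)).
Proof.
move=> S0; rewrite -sum_orderings_rev sum_orderings_cons //.
apply: eq_bigr => j _; rewrite -sum_orderings_rev.
by apply: eq_bigr => t _; rewrite /= rev_cons revK.
Qed.

Lemma orderings_neq_nil S (t : seq T) :
  S != set0 -> t \in permutations (enum S) -> t != [::].
Proof.
move=> S0; rewrite mem_permutations => /perm_size; rewrite -cardE.
by case: t => //= H; move: S0; rewrite -card_gt0 -H.
Qed.

Lemma big_Sn_permutations k (f : 'I_k -> T) G : injective f ->
  \sum_(s : 'S_k) G [seq f (s i) | i <- enum 'I_k] =
  \sum_(t <- permutations [seq f i | i <- enum 'I_k]) G t.
Proof.
move=> f_inj; pose word (s : 'S_k) := [seq f (s i) | i <- enum 'I_k].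
have word_inj : injective word.
  move=> s1 s2 /eq_in_map E; apply/permP => i; apply: f_inj.
  by apply: E; rewrite mem_enum.
have word_perm s : word s \in permutations [seq f i | i <- enum 'I_k].
  rewrite mem_permutations /word (map_comp f s); apply: perm_map.
  apply: uniq_perm; rewrite ?(map_inj_uniq (@perm_inj _ s)) ?enum_uniq // => x.
  rewrite mem_enum; apply/mapP; exists (s^-1 x)%g; rewrite ?mem_enum ?permKV //.
have uniq_words : uniq [seq word s | s <- enum 'S_k].
  by rewrite (map_inj_uniq word_inj) enum_uniq.
have sub_words : {subset [seq word s | s <- enum 'S_k] <= permutations [seq f i | i <- enum 'I_k]}.
  by move=> t /mapP[s _ ->].
rewrite -[LHS](big_map word xpredT G) [index_enum _]unlock -enumT.
apply/perm_big/uniq_perm; rewrite ?permutations_uniq //.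
apply: (uniq_min_size uniq_words sub_words _).2.
rewrite size_permutations ?(map_inj_uniq f_inj) ?enum_uniq //.
by rewrite !size_map -!enumT -!cardT card_ord card_Sn.
Qed.

End Orderings.

Section SetPartitions.
Variable T : finType.
Implicit Types (S Q : {set T}) (P : {set {set T}}).

Lemma set_proper_ind (Pr : {set T} -> Prop) :
  (forall S, (forall S', S' \proper S -> Pr S') -> Pr S) -> forall S, Pr S.
Proof.
move=> IH S; elim: {S}_.+1 {-2}S (ltnSn #|S|) => // N IHN S leSN.
by apply: IH => S' /proper_card ltS'S; apply: IHN; apply: leq_trans ltS'S leSN.
Qed.

Lemma partition_setU1 S Q P m : m \in Q -> Q \subset S ->
  partition P (S :\: Q) -> partition (Q |: P) S.
Proof.
move=> mQ QS PS; have Q0 : Q != set0 by apply/set0Pn; exists m.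
have disQ : [disjoint Q & S :\: Q] by rewrite disjoint_sym disjoints_subset setDE subsetIr.
have -> : S = Q :|: S :\: Q.
  by apply/setP => x; rewrite !inE; case xQ: (x \in Q); rewrite //= (subsetP QS).
exact: partitionU1.
Qed.

Lemma notin_partition_setD S Q P m : m \in Q -> partition P (S :\: Q) -> Q \notin P.
Proof.
move=> mQ PS; apply/negP => /(partitionS PS)/subsetP/(_ m mQ).
by rewrite inE mQ.
Qed.

Lemma big_partition_block (V : nmodType) S m (f : {set {set T}} -> V) : m \in S ->
  \sum_(P : {set {set T}} | partition P S) f P =
  \sum_(Q : {set T} | (m \in Q) && (Q \subset S)) \sum_(P : {set {set T}} | partition P (S :\: Q)) f (Q |: P).
Proof.
move=> mS; rewrite (partition_big (pblock^~ m) (fun Q => (m \in Q) && (Q \subset S))) /=; last first.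
  move=> P PS; have covP := cover_partition PS; rewrite mem_pblock covP mS /=.
  by apply: partitionS PS _; apply: pblock_mem; rewrite covP.
apply: eq_bigr => Q /andP[mQ QS].
rewrite (reindex_onto (fun P => Q |: P) (fun P => P :\ Q)) /=; last first.
  by move=> P /andP[PS /eqP <-]; apply/setD1K/pblock_mem; rewrite (cover_partition PS).
apply: eq_bigl => P; apply/idP/idP => [/andP[/andP[PS _] /eqP <-]|PS].
  exact: partitionD1 PS (setU11 _ _).
have QP := partition_setU1 mQ QS PS.
rewrite setU1K ?(notin_partition_setD mQ PS) // eqxx QP andbT /=.
by rewrite (def_pblock (partition_trivIset QP) (setU11 _ _) mQ).
Qed.

Lemma big_block_setD1 (V : nmodType) S m (G : {set T} -> T -> V) :
  \sum_(Q : {set T} | (m \in Q) && (Q \subset S)) \sum_(j in Q :\ m) G Q j =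
  \sum_(Q : {set T} | (m \in Q) && (Q \subset S)) \sum_(j in S :\: Q) G (j |: Q) j.
Proof.
rewrite (exchange_big_dep xpredT) //= [RHS](exchange_big_dep xpredT) //=.
apply: eq_bigr => j _.
rewrite (reindex_onto (fun Q => j |: Q) (fun Q => Q :\ j)) /=; last first.
  by move=> Q /andP[_]; rewrite inE => /andP[_ jQ]; rewrite setD1K.
apply: eq_bigl => Q.
have -> : ((j |: Q) :\ j == Q) = (j \notin Q).
  by apply/eqP/idP => [<-|/setU1K //]; rewrite !inE eqxx.
rewrite subUset sub1set !inE eqxx /= andbT.
case: (eqVneq j m) => [->|_]; first by case: (m \in Q); rewrite ?andbF.
by case: (m \in Q); case: (j \in Q); case: (j \in S); case: (Q \subset S).
Qed.

Lemma exchange_big_block_setD1 (V : nmodType) S m (G : {set T} -> T -> V) :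
  \sum_(j in S | j != m) \sum_(Q : {set T} | (m \in Q) && (Q \subset S :\ j)) G Q j =
  \sum_(Q : {set T} | (m \in Q) && (Q \subset S)) \sum_(j in S :\: Q) G Q j.
Proof.
rewrite (exchange_big_dep (fun Q => (m \in Q) && (Q \subset S))) /=; last first.
  by move=> j Q _ /andP[-> /subset_trans]; apply; apply: subD1set.
apply: eq_bigr => Q /andP[mQ QS]; apply: eq_bigl => j.
rewrite subsetD1 mQ QS !inE /=.
case: (eqVneq j m) => [->|_]; first by rewrite mQ andbF.
by rewrite andbT; case: (j \in Q); case: (j \in S).
Qed.

End SetPartitions.

Section BlockMax.
Variable n : nat.
Implicit Types (S Q B C : {set 'I_n}) (P : {set {set 'I_n}}).

Definition is_max (m : 'I_n) S := m \in S /\ forall i, i \in S -> (i <= m)%N.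

Lemma is_maxS m S Q : is_max m S -> m \in Q -> Q \subset S -> is_max m Q.
Proof. by move=> [_ maxm] mQ /subsetP QS; split=> // i /QS; apply: maxm. Qed.

Lemma block_max_witness B : B != set0 -> {i | i \in B & block_max B = val i}.
Proof. by move=> B0; apply: eq_bigmax_cond; rewrite card_gt0. Qed.

Lemma block_maxE m B : is_max m B -> block_max B = val m.
Proof.
case=> mB maxm; apply/eqP; rewrite eqn_leq (leq_bigmax_cond m) // andbT.
by apply/bigmax_leqP => i; apply: maxm.
Qed.

Lemma is_max_exists S : S != set0 -> exists m, is_max m S.
Proof.
move=> S0; have [m mS Em] := block_max_witness S0.
by exists m; split=> // i iS; rewrite -Em (leq_bigmax_cond i).
Qed.

Lemma block_max_inj D P B C : partition P D -> B \in P -> C \in P ->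
  block_max B = block_max C -> B = C.
Proof.
move=> PD BP CP; have [i iB ->] := block_max_witness (partition_neq0 PD BP).
have [j jC -> /val_inj eq_ij] := block_max_witness (partition_neq0 PD CP).
have tP := partition_trivIset PD; rewrite -eq_ij in jC.
by rewrite -(def_pblock tP BP iB) -(def_pblock tP CP jC).
Qed.

Lemma sorted_blocks_setU1 S Q P m : is_max m S -> m \in Q -> Q \subset S ->
  partition P (S :\: Q) -> sorted_blocks (Q |: P) = rcons (sorted_blocks P) Q.
Proof.
move=> maxS mQ QS PS; have [mS maxm] := maxS.
pose le B C := (block_max B <= block_max C)%N.
have le_trans : transitive le by move=> ? ? ?; apply: leq_trans.
have le_total : total le by move=> ? ?; apply: leq_total.
have maxQ : block_max Q = val m by apply/block_maxE/(is_maxS maxS).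
have max_lt B : B \in P -> (block_max B < m)%N.
  move=> BP; have [i iB ->] := block_max_witness (partition_neq0 PS BP).
  have := subsetP (partitionS PS BP) i iB; rewrite !inE => /andP[iQ iS].
  by rewrite ltn_neqAle maxm // andbT; apply: contraNneq iQ => /val_inj ->.
have QP := partition_setU1 mQ QS PS.
rewrite /sorted_blocks -/le -[RHS](sorted_sort le_trans); last first.
  case E: (sort le (enum P)) => [|B l] //=; rewrite rcons_path.
  have lP : last B l \in P by rewrite -mem_enum -(mem_sort le) E mem_last.
  have := sort_sorted le_total (enum P); rewrite E /= => -> /=.
  by rewrite /le maxQ ltnW ?max_lt.
apply/perm_sort_inP => [? ? _ _|? ? ? _ _ _|B C|]; rewrite ?mem_enum.
- exact: le_total.
- exact: le_trans.
- by move=> BP CP /andP[h1 h2]; apply: (block_max_inj QP) => //; apply/eqP; rewrite eqn_leq; apply/andP.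
apply: uniq_perm; rewrite ?enum_uniq //.
  by rewrite rcons_uniq sort_uniq enum_uniq andbT mem_sort mem_enum (notin_partition_setD mQ PS).
by move=> B; rewrite mem_enum mem_rcons !inE mem_sort mem_enum.
Qed.

Lemma block_elems_max m Q : is_max m Q ->
  {e | block_elems Q = rcons e m & perm_eq e (enum (Q :\ m))}.
Proof.
move=> [mQ maxm]; pose le (i j : 'I_n) := (i <= j)%N.
have sorted_e : sorted le (block_elems Q) by apply: sort_sorted => ? ?; apply: leq_total.
have uniq_e : uniq (block_elems Q) by rewrite sort_uniq enum_uniq.
have mem_e : block_elems Q =i Q by move=> x; rewrite mem_sort mem_enum.
move: sorted_e uniq_e mem_e; case/lastP: (block_elems Q) => [|e l] sorted_e uniq_e mem_e.
  by move: (mem_e m); rewrite mQ.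
have lm : l = m.
  apply/val_inj/eqP; rewrite eqn_leq maxm -?mem_e ?mem_rcons ?mem_head //=.
  move: (mem_e m); rewrite mQ mem_rcons inE => /predU1P[->//|me].
  have le_trans : transitive le by move=> ? ? ?; apply: leq_trans.
  suff /andP[] : sorted le [:: m; l] by [].
  apply: (subseq_sorted le_trans _ sorted_e).
  by rewrite -cats1; apply: (@cat_subseq _ [:: m]); rewrite sub1seq ?mem_head.
rewrite lm in uniq_e mem_e *; exists e => //.
apply: uniq_perm; rewrite ?enum_uniq //; first by move: uniq_e; rewrite rcons_uniq => /andP[].
move=> x; rewrite mem_enum !inE -mem_e mem_rcons inE.
by case: eqVneq => [->|//]; move: uniq_e; rewrite rcons_uniq => /andP[/negbTE ->].
Qed.

End BlockMax.

Section RotaBaxter.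
Variables (F : fieldType) (A : algType F) (theta : F) (R : {linear A -> A}).
Hypothesis hR : is_rota_baxter theta R.

Local Notation tri := (rb_tri theta R).
Local Notation star := (rb_star theta R).

Lemma R_rb_star x y : R (star x y) = R x * R y.
Proof. by rewrite hR /rb_star linearD linearZ. Qed.

Lemma rb_tri_suml (I : Type) (r : seq I) (G : I -> A) y :
  tri (\sum_(t <- r) G t) y = \sum_(t <- r) tri (G t) y.
Proof.
by rewrite /rb_tri !sumrB -mulr_suml -mulr_sumr -scaler_sumr -mulr_sumr linear_sum.
Qed.

Lemma rb_tri_add y c : tri y c + c * (R y + theta *: y) = R y * c.
Proof. by rewrite /rb_tri mulrDr -scalerAr -[R y * c - _ - _]addrA -opprD subrK. Qed.

Lemma star_prod_rcons (l : seq A) x :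
  star_prod theta R (rcons l x) = if l is [::] then x else star (star_prod theta R l) x.
Proof. by case: l => //= y l; rewrite foldl_rcons. Qed.

Variables (n : nat) (b : 'I_n -> A).
Implicit Types (S Q D : {set 'I_n}) (X Y : {set 'I_n} -> A).

(* The value [1] on the empty set encodes the single-letter words. *)
Definition Rhat X S := if S == set0 then 1 else R (X S).

Definition rb_rec X S := \sum_(j in S) Rhat X (S :\ j) * b j.

Definition word_sum S := sum_orderings S (fun t => rb_word R (map b t)).

Definition part_sum S := \sum_(P : {set {set 'I_n}} | partition P S)
  star_prod theta R [seq block_term theta R b B | B <- sorted_blocks P].

Definition block_sum Q m := sum_orderings (Q :\ m) (fun t => foldl tri (b m) (map b t)).

Lemma rb_rec_uniq X Y :
  (forall S, X S = rb_rec X S) -> (forall S, Y S = rb_rec Y S) -> X =1 Y.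
Proof.
move=> recX recY; elim/set_proper_ind => S IH; rewrite recX recY.
by apply: eq_bigr => j jS; rewrite /Rhat IH // properD1.
Qed.

Lemma word_sum_rec S : word_sum S = rb_rec word_sum S.
Proof.
rewrite /rb_rec /word_sum; have [->|S0] := eqVneq S set0.
  by rewrite big_set0 sum_orderings0.
rewrite (sum_orderings_rcons _ S0); apply: eq_bigr => j Sj.
rewrite /Rhat; have [->|Sj0] := eqVneq (S :\ j) set0.
  by rewrite sum_orderings0 mul1r.
rewrite /sum_orderings linear_sum mulr_suml big_seq [RHS]big_seq.
apply: eq_bigr => t /(orderings_neq_nil Sj0).
by case: t => // x t _; rewrite map_rcons /= foldl_rcons.
Qed.

Lemma part_sum0 : part_sum set0 = 0.
Proof.
rewrite /part_sum (eq_bigl (pred1 set0)) => [|P]; last by rewrite partition_set0.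
by rewrite big_pred1_eq /sorted_blocks enum_set0.
Qed.

Lemma block_term_sum m Q : is_max m Q -> block_term theta R b Q = block_sum Q m.
Proof.
move=> maxQ; have [e eQ e_perm] := block_elems_max maxQ.
have uniq_e : uniq e by rewrite (perm_uniq e_perm) enum_uniq.
rewrite /block_term eQ size_map size_rcons map_rcons last_rcons /=.
pose f (i : 'I_(size e)) := nth m e i.
have f_inj : injective f by move=> i j /eqP; rewrite nth_uniq // => /eqP/val_inj.
have enum_f : [seq f i | i <- enum 'I_(size e)] = e.
  by rewrite /f -[RHS](mkseq_nth m) /mkseq -val_enum_ord -map_comp.
transitivity (\sum_(s : 'S_(size e))
   (fun t => foldl tri (b m) (map b (rev t))) [seq f (s i) | i <- enum 'I_(size e)]).
  apply: eq_bigr => s _ /=; rewrite !map_rev -!map_comp.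
  congr (foldl _ _ (rev _)); apply: eq_map => j /=.
  by rewrite nth_rcons size_map ltn_ord (nth_map m) ?ltn_ord.
rewrite (big_Sn_permutations (fun t => foldl tri (b m) (map b (rev t))) f_inj) enum_f /block_sum -sum_orderings_rev.
exact: big_permutations_perm.
Qed.

Lemma block_sum_rec Q m : m \in Q -> block_sum Q m =
  (if Q :\ m == set0 then b m else 0) + \sum_(j in Q :\ m) tri (block_sum (Q :\ j) m) (b j).
Proof.
move=> mQ; rewrite /block_sum; have [->|Q0] := eqVneq (Q :\ m) set0.
  by rewrite sum_orderings0 big_set0 addr0.
rewrite add0r (sum_orderings_rcons _ Q0); apply: eq_bigr => j _.
rewrite [Q :\ j :\ m]setDDl [Q :\ m :\ j]setDDl setUC /sum_orderings rb_tri_suml.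
by apply: eq_bigr => t _; rewrite map_rcons foldl_rcons.
Qed.

Lemma part_sum_star D y :
  \sum_(P : {set {set 'I_n}} | partition P D)
     (if D == set0 then y
      else star (star_prod theta R [seq block_term theta R b B | B <- sorted_blocks P]) y)
  = Rhat part_sum D * y + part_sum D * (R y + theta *: y).
Proof.
rewrite /Rhat; have [->|D0] := eqVneq D set0.
  rewrite part_sum0 mul0r addr0 mul1r (eq_bigl (pred1 set0)) ?big_pred1_eq // => P.
  by rewrite partition_set0.
rewrite /part_sum /rb_star !big_split /= -!mulr_suml -scaler_sumr -mulr_suml -linear_sum.
by rewrite mulrDr scalerAr addrA.
Qed.

Lemma part_sum_max_block S m : is_max m S -> part_sum S =
  \sum_(Q : {set 'I_n} | (m \in Q) && (Q \subset S))
     (Rhat part_sum (S :\: Q) * block_sum Q m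
      + part_sum (S :\: Q) * (R (block_sum Q m) + theta *: block_sum Q m)).
Proof.
move=> maxS; have [mS _] := maxS.
rewrite {1}/part_sum (big_partition_block _ mS); apply: eq_bigr => Q /andP[mQ QS].
rewrite -(block_term_sum (is_maxS maxS mQ QS)) -part_sum_star; apply: eq_bigr => P PS.
rewrite (sorted_blocks_setU1 maxS mQ QS PS) map_rcons star_prod_rcons.
have [D0|D0] := eqVneq (S :\: Q) set0.
  by move: PS; rewrite D0 partition_set0 => /eqP ->; rewrite /sorted_blocks enum_set0.
have : sorted_blocks P != [::].
  rewrite -size_eq0 size_sort -cardE cards_eq0; apply: contra D0 => /eqP P0.
  by rewrite -(cover_partition PS) P0 /cover big_set0.
by case: (sorted_blocks P).
Qed.

Lemma R_part_sum_max_block S m : is_max m S -> R (part_sum S) =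
  \sum_(Q : {set 'I_n} | (m \in Q) && (Q \subset S)) Rhat part_sum (S :\: Q) * R (block_sum Q m).
Proof.
move=> maxS; rewrite (part_sum_max_block maxS) linear_sum; apply: eq_bigr => Q _.
rewrite /Rhat; case: eqP => [->|_]; first by rewrite part_sum0 mul0r addr0 !mul1r.
by rewrite mulrDr -scalerAr addrA -R_rb_star.
Qed.

Lemma sum_Rpart_sum_setD1 S m : is_max m S ->
  \sum_(j in S | j != m) Rhat part_sum (S :\ j) * b j =
  \sum_(Q : {set 'I_n} | (m \in Q) && (Q \subset S))
     \sum_(j in S :\: Q) Rhat part_sum (S :\: Q :\ j) * R (block_sum Q m) * b j.
Proof.
move=> maxS; have [mS _] := maxS.
rewrite -exchange_big_block_setD1; apply: eq_bigr => j /andP[jS jm].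
have mSj : m \in S :\ j by rewrite !inE eq_sym jm.
rewrite /Rhat ifN; last by apply/set0Pn; exists m.
rewrite (R_part_sum_max_block (is_maxS maxS mSj (subD1set S j))) mulr_suml.
by apply: eq_bigr => Q _; rewrite !setDDl setUC.
Qed.

Lemma part_sum_rec_max S m : is_max m S ->
  (forall Q, m \in Q -> part_sum (S :\: Q) = rb_rec part_sum (S :\: Q)) ->
  part_sum S = Rhat part_sum (S :\ m) * b m +
    \sum_(Q : {set 'I_n} | (m \in Q) && (Q \subset S))
       \sum_(j in S :\: Q) Rhat part_sum (S :\: Q :\ j) * R (block_sum Q m) * b j.
Proof.
move=> maxS recD; have [mS _] := maxS.
rewrite (part_sum_max_block maxS).
under eq_bigr => Q /andP[mQ _] do
  rewrite recD // /rb_rec mulr_suml {1}(block_sum_rec mQ) mulrDr mulr_sumr.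
rewrite !big_split /= -addrA; congr (_ + _).
  rewrite (bigD1 [set m]) /= ?set11 ?sub1set // setDv eqxx big1 ?addr0 // => Q.
  case/andP=> /andP[mQ _] Qm; rewrite ifN ?mulr0 //; apply: contraNneq Qm => Q0.
  by rewrite -(setD1K mQ) Q0 setU0.
rewrite big_block_setD1 -big_split /=; apply: eq_bigr => Q _.
rewrite -big_split /=; apply: eq_bigr => j /setDP[_ jQ].
by rewrite setU1K // setDDl setUC -setDDl -mulrA -mulrDr rb_tri_add mulrA.
Qed.

Lemma part_sum_rec S : part_sum S = rb_rec part_sum S.
Proof.
elim/set_proper_ind: S => S IH; have [->|S0] := eqVneq S set0.
  by rewrite part_sum0 /rb_rec big_set0.
have [m maxS] := is_max_exists S0; have [mS _] := maxS.
rewrite (part_sum_rec_max maxS) => [|Q mQ]; last first.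
  apply/IH/properP; split; first exact: subsetDl.
  by exists m; rewrite // !inE mQ.
by rewrite /rb_rec (bigD1 m) //= sum_Rpart_sum_setD1.
Qed.

Lemma rb_lhs_word_sum : rb_lhs R b = word_sum [set: 'I_n].
Proof.
rewrite /rb_lhs /word_sum /sum_orderings enum_setT -enumT.
have := big_Sn_permutations (fun t => rb_word R (map b t)) (@inj_id 'I_n).
by rewrite map_id => <-; apply: eq_bigr => s _; rewrite -[in RHS]map_comp.
Qed.

End RotaBaxter.

Theorem corollary3p6 (F : fieldType) (A : algType F)
    (hF : [pchar F] =i pred0)
    (theta : F) (R : {linear A -> A})
    (hR : is_rota_baxter theta R)
    (n : nat) (hn : (0 < n)%N) (b : 'I_n -> A) :
  rb_lhs R b = rb_rhs theta R b.
Proof.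
rewrite rb_lhs_word_sum.
exact: rb_rec_uniq (word_sum_rec R b) (part_sum_rec hR b) [set: 'I_n].
Qed.
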